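(* In the setting below, for $v\in T_PM$ let $E|_v=\{x(v):x\in\Delta\}$, where $\Delta=\{x\in\mathbb{R}[T_PM,T_PM]: A(v)x(v)=0\text{ for all }v\}$. Then $E|_v=E|_{-v}$ for all $v\in T_PM\setminus\{0\}$.
   Context: $M$ is a locally isotropic pseudo-Riemannian manifold of signature $(p,q)$, $q>p\ge2$, $P\in M$, $n\ge1$, and $S:T_PM\to\mathrm{Hom}(T_PM,T_PM)$, $S\not\equiv0$, satisfies: each $S(v)$ self-adjoint; $S(v)v=0$; $S(-v)=-S(v)$; $S(Tv)=T\circ S(v)\circ T^{-1}$ for differentials $T$ of local isometries fixing $P$; and $S$ is a homogeneous polynomial of degree $2n+1$ in the coordinates of $v$. The spectrum of $S(v)$ for unit timelike $v$ is $\{0,\pm\lambda_1,\dots,\pm\lambda_l\}$, $\lambda_i>0$, $l\ge1$; $\sigma_k(\lambda)$ is the $k$-th elementary symmetric function of $\lambda_1^2,\dots,\lambda_l^2$; $A(v)=S(v)^{2l}+\sum_{k=1}^l\sigma_k(\lambda)(v,v)^{(2n+1)k}S(v)^{2l-2k}$. $\mathbb{R}[T_PM,T_PM]$ denotes polynomial maps $T_PM\to T_PM$. *)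

From HB Require Import structures.
From mathcomp Require Import all_boot all_order all_algebra.
From mathcomp Require Import mpoly complex.
Set Implicit Arguments. Unset Strict Implicit. Unset Printing Implicit Defensive.
Import Order.TTheory GRing.Theory Num.Theory.
Local Open Scope ring_scope.

(* T_P M is modelled as row vectors 'rV[R]_(p+q) in an orthonormal basis
   (e_0..e_{p-1} timelike, e_p..e_{p+q-1} spacelike).  Endomorphisms of
   T_P M are square matrices acting on the right: w |-> w *m A. *)

Section Defs.
Variable R : rcfType.
Variables p q : nat.
Local Notation m := (p + q)%N.
Local Notation V := 'rV[R]_m.

Definition metric (u w : V) : R :=
  \sum_(i < m) (if (i < p)%N then -1 else 1) * u 0 i * w 0 i.

(* matrix power (square matrices of size p+q have no ring instance in general) *)
Definition mxpow (A : 'M[R]_m) (k : nat) : 'M[R]_m := iter k (mulmx A) 1%:M.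

Definition poly_map (x : V -> V) : Prop :=
  exists Q : 'I_m -> {mpoly R[m]}, forall v, x v = \row_i (Q i).@[fun k => v 0 k].

Definition homog_poly_endo (d : nat) (S : V -> 'M[R]_m) : Prop :=
  exists P : 'I_m -> 'I_m -> {mpoly R[m]},
    (forall i j, P i j \is d.-homog) /\
    forall v i j, S v i j = (P i j).@[fun k => v 0 k].

Definition sigma (l : nat) (lam : 'I_l -> R) (k : nat) : R :=
  \sum_(I : {set 'I_l} | #|I| == k) \prod_(i in I) lam i ^+ 2.

Definition Aop (n l : nat) (lam : 'I_l -> R) (S : V -> 'M[R]_m) (v : V)
  : 'M[R]_m :=
  mxpow (S v) (2 * l) +
  \sum_(k < l) (sigma lam k.+1 * metric v v ^+ ((2 * n + 1) * k.+1))
                 *: mxpow (S v) (2 * l - 2 * k.+1).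

Definition Delta (n l : nat) (lam : 'I_l -> R) (S : V -> 'M[R]_m)
  (x : V -> V) : Prop :=
  poly_map x /\ forall v, x v *m Aop n lam S v = 0.

Definition Efib (n l : nat) (lam : 'I_l -> R) (S : V -> 'M[R]_m)
  (v : V) (w : V) : Prop :=
  exists x, Delta n lam S x /\ x v = w.

Definition cspectrum (A : 'M[R]_m) (z : R[i]) : Prop :=
  root (map_poly (real_complex R) (char_poly A)) z.

(* the group of differentials at P of local isometries fixing P,
   for a locally isotropic pseudo-Riemannian manifold *)
Definition isotropy_group (G : 'M[R]_m -> Prop) : Prop :=
  [/\ G 1%:M,
      (forall T1 T2, G T1 -> G T2 -> G (T1 *m T2)),
      (forall T, G T -> T \in unitmx /\ G (invmx T)),
      (forall T, G T -> forall u w, metric (u *m T) (w *m T) = metric u w)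
    &
      (forall u w, metric u u = metric w w -> metric u u != 0 ->
         exists2 T, G T & u *m T = w)].

End Defs.

From HB Require Import structures.
From mathcomp Require Import all_boot all_order all_algebra.
From mathcomp Require Import mpoly complex.
Import Order.TTheory GRing.Theory Num.Theory.
Local Open Scope ring_scope.

(* Only the oddness of S matters: A(v) involves S(v) and (v,v) only through
   even powers, so A(-v) = A(v).  Hence x |-> x(- _) maps Delta to itself,
   and x(v) = (x(- _))(-v) puts every point of E|_v in E|_{-v}; the converse
   is the same argument applied to -v. *)

Section OddOperator.

Variables (R : rcfType) (p q : nat).
Local Notation m := (p + q)%N.
Local Notation V := 'rV[R]_m.

Lemma mxpowN_even (A : 'M[R]_m) (k : nat) :
  mxpow (- A) (2 * k) = mxpow A (2 * k).
Proof.
elim: k => [//|k IHk]; rewrite /mxpow in IHk *.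
by rewrite mulnS !iterS IHk !mulNmx !mulmxN opprK.
Qed.

Lemma metricNN (u w : V) : metric (- u) (- w) = metric u w.
Proof. by apply: eq_bigr => i _; rewrite !mxE !mulrN !mulNr opprK. Qed.

Lemma poly_map_compN (x : V -> V) : poly_map x -> poly_map (fun u => x (- u)).
Proof.
case=> Q defx; exists (fun i => Q i \mPo [tuple - 'X_j | j < m]) => u.
apply/rowP => i; rewrite defx !mxE comp_mpoly_meval.
by apply: meval_eq => j; rewrite tnth_mktuple mevalN mevalXU mxE.
Qed.

Variables (n l : nat) (lam : 'I_l -> R) (S : V -> 'M[R]_m).
Hypothesis S_odd : forall v, S (- v) = - S v.

Lemma AopN (v : V) : Aop n lam S (- v) = Aop n lam S v.
Proof.
rewrite /Aop S_odd mxpowN_even metricNN; congr (_ + _).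
by apply: eq_bigr => k _; rewrite -mulnBr mxpowN_even.
Qed.

Lemma Delta_compN (x : V -> V) :
  Delta n lam S x -> Delta n lam S (fun u => x (- u)).
Proof.
case=> polyx xA; split; first exact: poly_map_compN.
by move=> u; rewrite -AopN.
Qed.

Lemma EfibN (v w : V) : Efib n lam S v w -> Efib n lam S (- v) w.
Proof.
case=> x [Deltax <-]; exists (fun u => x (- u)).
by rewrite opprK; split; first exact: Delta_compN.
Qed.

End OddOperator.

Theorem lemma5p6 (R : rcfType) (p q : nat) (G : 'M[R]_(p + q) -> Prop)
  (n l : nat) (lam : 'I_l -> R) (S : 'rV[R]_(p + q) -> 'M[R]_(p + q)) :
  (2 <= p)%N -> (p < q)%N -> (1 <= n)%N ->
  isotropy_group G ->
  (* S is not identically zero *)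
  (exists v, S v != 0) ->
  (* each S(v) is self-adjoint *)
  (forall v u w, metric (u *m S v) w = metric u (w *m S v)) ->
  (* S(v) v = 0 *)
  (forall v, v *m S v = 0) ->
  (* S(-v) = - S(v) *)
  (forall v, S (- v) = - S v) ->
  (* equivariance under differentials T of local isometries fixing P:
     S(Tv) = T o S(v) o T^{-1}  (maps act on row vectors from the right) *)
  (forall T v, G T -> S (v *m T) = invmx T *m S v *m T) ->
  (* S is a homogeneous polynomial of degree 2n+1 *)
  homog_poly_endo (2 * n + 1) S ->
  (* spectrum of S(v), v unit timelike, is {0, +-lam_1, ..., +-lam_l} *)
  (1 <= l)%N -> (forall i, 0 < lam i) -> injective lam ->
  (forall v, metric v v = -1 -> forall z : R[i],
     cspectrum (S v) z <->
     (z = 0 \/ exists i, z = (lam i)%:C%C \/ z = (- lam i)%:C%C)) ->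
  forall v : 'rV[R]_(p + q), v != 0 ->
    forall w, Efib n lam S v w <-> Efib n lam S (- v) w.
Proof.
move=> _ _ _ _ _ _ _ S_odd _ _ _ _ _ _ v _ w.
split; first exact: EfibN.
by rewrite -{2}[v]opprK; apply: EfibN.
Qed.
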